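(* Let $\mathcal D$ be a preduoidal category and $T$ a separately opmonoidal monad on $\mathcal D$ equipped with an R-matrix $(R,\nu,\varpi,\iota)$. Then $\mathcal D^T$, with its lifted monoidal structures $(\circ,(\bot,T^\circ_0))$ and $(\bullet,(1,T^\bullet_0))$, is a duoidal category with structure morphisms $\nu,\varpi,\iota$ and interchange law $$\xi_{a,b,c,d} := ((\alpha\circ\gamma)\bullet(\beta\circ\delta))\cdot R_{a,b,c,d}\colon (a\bullet b)\circ(c\bullet d)\to(a\circ c)\bullet(b\circ d)$$ for all $T$-algebras $(a,\alpha),(b,\beta),(c,\gamma),(d,\delta)$. In particular each $\xi_{a,b,c,d}$ is a morphism of $T$-algebras.
   Context: Composition of morphisms is written $g\cdot f$ ($f$ first). A preduoidal category is a category $\mathcal D$ with two monoidal structures $(\circ,\bot)$ and $(\bullet,1)$ (associators $\alpha$, unitors $\lambda^\circ,\rho^\circ,\lambda^\bullet,\rho^\bullet$). A bimonad on a monoidal category $(\mathcal C,\otimes,I)$ is a monad $(B,\mu,\eta)$ with an opmonoidal structure $B_2\colon B(x\otimes y)\to Bx\otimes By$, $B_0\colon BI\to I$ such that $\mu,\eta$ are opmonoidal. A separately opmonoidal monad on $\mathcal D$ is a monad $(T,\mu,\eta)$ with a bimonad structure $(T^\circ_2,T^\circ_0)$ on $(\mathcal D,\circ,\bot)$ and one $(T^\bullet_2,T^\bullet_0)$ on $(\mathcal D,\bullet,1)$. Lifted monoidal structures on $\mathcal D^T$: $(a,\alpha)\circ(b,\beta)=(a\circ b,(\alpha\circ\beta)\cdot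 T^\circ_{2,a,b})$, unit $(\bot,T^\circ_0)$; $(a,\alpha)\bullet(b,\beta)=(a\bullet b,(\alpha\bullet\beta)\cdot T^\bullet_{2,a,b})$, unit $(1,T^\bullet_0)$. Duoidal category: a preduoidal category with a natural transformation $\zeta_{x,y,a,b}\colon (x\bullet y)\circ(a\bullet b)\to(x\circ a)\bullet(y\circ b)$ and morphisms $\nu\colon\bot\to\bot\bullet\bot$, $\varpi\colon 1\circ 1\to 1$, $\iota\colon\bot\to 1$ such that $(1,\varpi,\iota)$ is a monoid in $(\mathcal D,\circ,\bot)$, $(\bot,\nu,\iota)$ is a comonoid in $(\mathcal D,\bullet,1)$, and: (A1) $(\alpha\bullet\alpha)\cdot\zeta_{x\circ a,y\circ b,c,d}\cdot(\zeta_{x,y,a,b}\circ\mathrm{id}) = \zeta_{x,y,a\circ c,b\circ d}\cdot(\mathrm{id}\circ\zeta_{a,b,c,d})\cdot\alpha$; (A2) $\alpha\cdot(\zeta_{x,a,y,b}\bullet\mathrm{id})\cdot\zeta_{x\bullet a,c,y\bullet b,d} = (\mathrm{id}\bullet\zeta_{a,c,b,d})\cdot\zeta_{x,a\bullet c,y,b\bullet d}\cdot(\alpha\circ\alpha)$; (U) $\zeta_{\bot,\bot,a,b}\cdot(\nu\circ\mathrm{id})=((\lambda^\circ_a)^{-1}\bullet(\lambda^\circ_b)^{-1})\cdot\lambda^\circ_{a\bullet b}$, $\zeta_{a,b,\bot,\bot}\cdot(\mathrm{id}\circ\nu)=((\rho^\circ_a)^{-1}\bullet(\rho^\circ_b)^{-1})\cdot\rho^\circ_{a\bullet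 b}$, $(\varpi\bullet\mathrm{id})\cdot\zeta_{1,a,1,b}=(\lambda^\bullet_{a\circ b})^{-1}\cdot(\lambda^\bullet_a\circ\lambda^\bullet_b)$, $(\mathrm{id}\bullet\varpi)\cdot\zeta_{a,1,b,1}=(\rho^\bullet_{a\circ b})^{-1}\cdot(\rho^\bullet_a\circ\rho^\bullet_b)$. For $\mathcal D^T$ all data are required to be morphisms of $T$-algebras. R-matrix on $T$: a natural transformation $R_{a,b,c,d}\colon (a\bullet b)\circ(c\bullet d)\to(Ta\circ Tc)\bullet(Tb\circ Td)$ together with morphisms of $T$-algebras $\nu\colon(\bot,T^\circ_0)\to(\bot,T^\circ_0)\bullet(\bot,T^\circ_0)$, $\varpi\colon(1,T^\bullet_0)\circ(1,T^\bullet_0)\to(1,T^\bullet_0)$, $\iota\colon(\bot,T^\circ_0)\to(1,T^\bullet_0)$, such that $(1,\varpi,\iota)$ is a monoid in $(\mathcal D^T,\circ,\bot)$, $(\bot,\nu,\iota)$ is a comonoid in $(\mathcal D^T,\bullet,1)$, and (associators suppressed): (R-unit) for all $T$-algebras $(a,\alpha),(b,\beta)$: $((T^\circ_0\circ\alpha)\bullet(T^\circ_0\circ\beta))\cdot R_{\bot,\bot,a,b}\cdot(\nu\circ\mathrm{id})=((\lambda^\circ_a)^{-1}\bullet(\lambda^\circ_b)^{-1})\cdot\lambda^\circ_{a\bullet b}$; $((\alpha\circ T^\circ_0)\bullet(\beta\circ T^\circ_0))\cdot R_{a,b,\bot,\bot}\cdot(\mathrm{id}\circ\nu)=((\rho^\circ_a)^{-1}\bullet(\rho^\circ_b)^{-1})\cdot\rho^\circ_{a\bullet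 b}$; $(\varpi\bullet\mathrm{id})\cdot((T^\bullet_0\circ T^\bullet_0)\bullet(\alpha\circ\beta))\cdot R_{1,a,1,b}=(\lambda^\bullet_{a\circ b})^{-1}\cdot(\lambda^\bullet_a\circ\lambda^\bullet_b)$; $(\mathrm{id}\bullet\varpi)\cdot((\alpha\circ\beta)\bullet(T^\bullet_0\circ T^\bullet_0))\cdot R_{a,1,b,1}=(\rho^\bullet_{a\circ b})^{-1}\cdot(\rho^\bullet_a\circ\rho^\bullet_b)$. (R-lift) for all objects: $((\mu_a\circ\mu_c)\bullet(\mu_b\circ\mu_d))\cdot R_{Ta,Tb,Tc,Td}\cdot(T^\bullet_{2,a,b}\circ T^\bullet_{2,c,d})\cdot T^\circ_{2,a\bullet b,c\bullet d} = ((\mu_a\circ\mu_c)\bullet(\mu_b\circ\mu_d))\cdot(T^\circ_{2,Ta,Tc}\bullet T^\circ_{2,Tb,Td})\cdot T^\bullet_{2,Ta\circ Tc,Tb\circ Td}\cdot TR_{a,b,c,d}$. (R-1) for all objects: $((\mu_a\circ\mu_c\circ Tx)\bullet(\mu_b\circ\mu_d\circ Ty))\cdot((T^\circ_{2,Ta,Tc}\circ Tx)\bullet(T^\circ_{2,Tb,Td}\circ Ty))\cdot R_{Ta\circ Tc,Tb\circ Td,x,y}\cdot(R_{a,b,c,d}\circ\mathrm{id}) = ((Ta\circ\mu_c\circ\mu_x)\bullet(Tb\circ\mu_d\circ\mu_y))\cdot((Ta\circ T^\circ_{2,Tc,Tx})\bullet(Tb\circ T^\circ_{2,Td,Ty}))\cdot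 R_{a,b,Tc\circ Tx,Td\circ Ty}\cdot(\mathrm{id}\circ R_{c,d,x,y})$. (R-2) for all objects: $(((\mu_x\circ\mu_y)\bullet(\mu_a\circ\mu_b))\bullet\mathrm{id})\cdot(R_{Tx,Ta,Ty,Tb}\bullet\mathrm{id})\cdot((T^\bullet_{2,x,a}\circ T^\bullet_{2,y,b})\bullet\mathrm{id})\cdot R_{x\bullet a,c,y\bullet b,d} = (\mathrm{id}\bullet((\mu_a\circ\mu_b)\bullet(\mu_c\circ\mu_d)))\cdot(\mathrm{id}\bullet R_{Ta,Tc,Tb,Td})\cdot(\mathrm{id}\bullet(T^\bullet_{2,a,c}\circ T^\bullet_{2,b,d}))\cdot R_{x,a\bullet c,y,b\bullet d}\cdot(\alpha\circ\alpha)$. *)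

(* Composition is written  g · f  (f first), as in the paper. *)
Unset Implicit Arguments.

Record CatRaw := mkCat {
  ob : Type;
  hom : ob -> ob -> Type;
  idm : forall a : ob, hom a a;
  comp : forall a b c : ob, hom b c -> hom a b -> hom a c }.
Arguments hom c0 a b : clear implicits, rename.
Arguments idm c0 a : clear implicits, rename.
Arguments comp {c0 a b c} g f : rename.
Notation "g · f" := (comp g f) (at level 40, left associativity).

Record MonRaw (C : CatRaw) := mkMon {
  ten : ob C -> ob C -> ob C;
  tenm : forall a b c d, hom C a b -> hom C c d -> hom C (ten a c) (ten b d);
  unt : ob C;
  asc : forall x y z, hom C (ten (ten x y) z) (ten x (ten y z));
  asci : forall x y z, hom C (ten x (ten y z)) (ten (ten x y) z);
  lu : forall x, hom C (ten unt x) x;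
  lui : forall x, hom C x (ten unt x);
  ru : forall x, hom C (ten x unt) x;
  rui : forall x, hom C x (ten x unt) }.
Arguments ten {C} M x y : rename.
Arguments tenm {C} M {a b c d} f g : rename.
Arguments unt {C} M : rename.
Arguments asc {C} M x y z : rename.
Arguments asci {C} M x y z : rename.
Arguments lu {C} M x : rename.
Arguments lui {C} M x : rename.
Arguments ru {C} M x : rename.
Arguments rui {C} M x : rename.

(* Raw data of a preduoidal category: a category with two monoidal
   structures (∘,⊥) = pc and (•,1) = pb. *)
Record PDRaw := mkPD { pcat : CatRaw; pc : MonRaw pcat; pb : MonRaw pcat }.

(* The axioms are stated relative to a predicate O on objects and a
   predicate Mor on morphisms: the category in question has objects the x
   with O x and morphisms the f with Mor f.  For an ordinary category both
   predicates are trivially true; for the Eilenberg-Moore category D^T,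
   objects are pairs (a, α) satisfying the algebra laws and morphisms are
   the maps of D that are T-algebra morphisms (see [liftPD] below). *)
Definition MorPred (C : CatRaw) := forall a b, hom C a b -> Prop.
Definition allO (C : CatRaw) : ob C -> Prop := fun _ => True.
Definition allM (C : CatRaw) : MorPred C := fun _ _ _ => True.

Definition CatAx (C : CatRaw) (O : ob C -> Prop) (Mor : MorPred C) : Prop :=
  (forall a, O a -> Mor a a (idm C a)) /\
  (forall a b c (f : hom C a b) (g : hom C b c),
      O a -> O b -> O c -> Mor _ _ f -> Mor _ _ g -> Mor _ _ (g · f)) /\
  (forall a b c d (f : hom C a b) (g : hom C b c) (h : hom C c d),
      O a -> O b -> O c -> O d -> Mor _ _ f -> Mor _ _ g -> Mor _ _ h ->
      h · (g · f) = (h · g) · f) /\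
  (forall a b (f : hom C a b), O a -> O b -> Mor _ _ f ->
      idm C b · f = f /\ f · idm C a = f).

Definition MonAx (C : CatRaw) (M : MonRaw C) (O : ob C -> Prop) (Mor : MorPred C)
  : Prop :=
  O (unt M) /\
  (forall a b, O a -> O b -> O (ten M a b)) /\
  (forall a b c d (f : hom C a b) (g : hom C c d),
      O a -> O b -> O c -> O d -> Mor _ _ f -> Mor _ _ g -> Mor _ _ (tenm M f g)) /\
  (forall x y z, O x -> O y -> O z ->
      Mor _ _ (asc M x y z) /\ Mor _ _ (asci M x y z)) /\
  (forall x, O x ->
      Mor _ _ (lu M x) /\ Mor _ _ (lui M x) /\ Mor _ _ (ru M x) /\ Mor _ _ (rui M x)) /\
  (forall a b, O a -> O b -> tenm M (idm C a) (idm C b) = idm C (ten M a b)) /\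
  (forall a1 b1 c1 a2 b2 c2 (f1 : hom C a1 b1) (g1 : hom C b1 c1)
          (f2 : hom C a2 b2) (g2 : hom C b2 c2),
      O a1 -> O b1 -> O c1 -> O a2 -> O b2 -> O c2 ->
      Mor _ _ f1 -> Mor _ _ g1 -> Mor _ _ f2 -> Mor _ _ g2 ->
      tenm M (g1 · f1) (g2 · f2) = tenm M g1 g2 · tenm M f1 f2) /\
  (forall x x' y y' z z' (f : hom C x x') (g : hom C y y') (h : hom C z z'),
      O x -> O x' -> O y -> O y' -> O z -> O z' ->
      Mor _ _ f -> Mor _ _ g -> Mor _ _ h ->
      asc M x' y' z' · tenm M (tenm M f g) h = tenm M f (tenm M g h) · asc M x y z) /\
  (forall x x' (f : hom C x x'), O x -> O x' -> Mor _ _ f ->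
      lu M x' · tenm M (idm C (unt M)) f = f · lu M x /\
      ru M x' · tenm M f (idm C (unt M)) = f · ru M x) /\
  (forall x y z, O x -> O y -> O z ->
      asc M x y z · asci M x y z = idm C _ /\ asci M x y z · asc M x y z = idm C _) /\
  (forall x, O x ->
      lu M x · lui M x = idm C _ /\ lui M x · lu M x = idm C _ /\
      ru M x · rui M x = idm C _ /\ rui M x · ru M x = idm C _) /\
  (forall x y z w, O x -> O y -> O z -> O w ->
      asc M x y (ten M z w) · asc M (ten M x y) z w =
      tenm M (idm C x) (asc M y z w) · asc M x (ten M y z) w · tenm M (asc M x y z) (idm C w)) /\
  (forall x y, O x -> O y ->
      tenm M (idm C x) (lu M y) · asc M x (unt M) y = tenm M (ru M x) (idm C y)).

Arguments MonAx {C} M O Mor.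

Definition Preduoidal (P : PDRaw) (O : ob (pcat P) -> Prop) (Mor : MorPred (pcat P))
  : Prop :=
  CatAx (pcat P) O Mor /\ MonAx (pc P) O Mor /\ MonAx (pb P) O Mor.

Definition IsMonoid (C : CatRaw) (M : MonRaw C) (x : ob C)
    (m : hom C (ten M x x) x) (u : hom C (unt M) x) : Prop :=
  m · tenm M m (idm C x) = m · tenm M (idm C x) m · asc M x x x /\
  m · tenm M u (idm C x) = lu M x /\
  m · tenm M (idm C x) u = ru M x.

Definition IsComonoid (C : CatRaw) (M : MonRaw C) (x : ob C)
    (d : hom C x (ten M x x)) (e : hom C x (unt M)) : Prop :=
  asc M x x x · tenm M d (idm C x) · d = tenm M (idm C x) d · d /\
  tenm M e (idm C x) · d = lui M x /\
  tenm M (idm C x) e · d = rui M x.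

Arguments IsMonoid {C} M x m u.
Arguments IsComonoid {C} M x d e.

Section Duoidal.
Variables (P : PDRaw) (O : ob (pcat P) -> Prop) (Mor : MorPred (pcat P)).
Local Notation C := (pcat P).
Local Notation "x ⊗c y" := (ten (pc P) x y) (at level 33, left associativity).
Local Notation "x ⊗b y" := (ten (pb P) x y) (at level 33, left associativity).
Local Notation "f ⊙c g" := (tenm (pc P) f g) (at level 33, left associativity).
Local Notation "f ⊙b g" := (tenm (pb P) f g) (at level 33, left associativity).
Local Notation bot := (unt (pc P)).
Local Notation one := (unt (pb P)).
Local Notation id x := (idm C x).

Definition Duoidal
  (z : forall x y a b, hom C ((x ⊗b y) ⊗c (a ⊗b b)) ((x ⊗c a) ⊗b (y ⊗c b)))
  (nu : hom C bot (bot ⊗b bot)) (varpi : hom C (one ⊗c one) one)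
  (iota : hom C bot one) : Prop :=
  (forall x y a b, O x -> O y -> O a -> O b -> Mor _ _ (z x y a b)) /\
  Mor _ _ nu /\ Mor _ _ varpi /\ Mor _ _ iota /\
  (forall x x' y y' a a' b b' (f : hom C x x') (g : hom C y y')
          (h : hom C a a') (k : hom C b b'),
      O x -> O x' -> O y -> O y' -> O a -> O a' -> O b -> O b' ->
      Mor _ _ f -> Mor _ _ g -> Mor _ _ h -> Mor _ _ k ->
      z x' y' a' b' · ((f ⊙b g) ⊙c (h ⊙b k)) = ((f ⊙c h) ⊙b (g ⊙c k)) · z x y a b) /\
  IsMonoid (pc P) one varpi iota /\
  IsComonoid (pb P) bot nu iota /\
  (forall x y a b c d, O x -> O y -> O a -> O b -> O c -> O d ->
      (asc (pc P) x a c ⊙b asc (pc P) y b d) · z (x ⊗c a) (y ⊗c b) c d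
        · (z x y a b ⊙c id (c ⊗b d)) =
      z x y (a ⊗c c) (b ⊗c d) · (id (x ⊗b y) ⊙c z a b c d)
        · asc (pc P) (x ⊗b y) (a ⊗b b) (c ⊗b d)) /\
  (forall x y a b c d, O x -> O y -> O a -> O b -> O c -> O d ->
      asc (pb P) (x ⊗c y) (a ⊗c b) (c ⊗c d) · (z x a y b ⊙b id (c ⊗c d))
        · z (x ⊗b a) c (y ⊗b b) d =
      (id (x ⊗c y) ⊙b z a c b d) · z x (a ⊗b c) y (b ⊗b d)
        · (asc (pb P) x a c ⊙c asc (pb P) y b d)) /\
  (forall a b, O a -> O b ->
      z bot bot a b · (nu ⊙c id (a ⊗b b)) =
        (lui (pc P) a ⊙b lui (pc P) b) · lu (pc P) (a ⊗b b) /\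
      z a b bot bot · (id (a ⊗b b) ⊙c nu) =
        (rui (pc P) a ⊙b rui (pc P) b) · ru (pc P) (a ⊗b b) /\
      (varpi ⊙b id (a ⊗c b)) · z one a one b =
        lui (pb P) (a ⊗c b) · (lu (pb P) a ⊙c lu (pb P) b) /\
      (id (a ⊗c b) ⊙b varpi) · z a one b one =
        rui (pb P) (a ⊗c b) · (ru (pb P) a ⊙c ru (pb P) b)).
End Duoidal.

Record MonadRaw (C : CatRaw) := mkMonad {
  Tob : ob C -> ob C;
  Tm : forall a b, hom C a b -> hom C (Tob a) (Tob b);
  mu : forall a, hom C (Tob (Tob a)) (Tob a);
  eta : forall a, hom C a (Tob a) }.
Arguments Tob {C} T a : rename.
Arguments Tm {C} T {a b} f : rename.
Arguments mu {C} T a : rename.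
Arguments eta {C} T a : rename.

Definition MonadAx (C : CatRaw) (T : MonadRaw C) : Prop :=
  (forall a, Tm T (idm C a) = idm C (Tob T a)) /\
  (forall a b c (f : hom C a b) (g : hom C b c), Tm T (g · f) = Tm T g · Tm T f) /\
  (forall a b (f : hom C a b), mu T b · Tm T (Tm T f) = Tm T f · mu T a) /\
  (forall a b (f : hom C a b), eta T b · f = Tm T f · eta T a) /\
  (forall a, mu T a · Tm T (mu T a) = mu T a · mu T (Tob T a)) /\
  (forall a, mu T a · eta T (Tob T a) = idm C (Tob T a)) /\
  (forall a, mu T a · Tm T (eta T a) = idm C (Tob T a)).

Definition BimonadAx (C : CatRaw) (M : MonRaw C) (T : MonadRaw C)
    (T2 : forall x y, hom C (Tob T (ten M x y)) (ten M (Tob T x) (Tob T y)))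
    (T0 : hom C (Tob T (unt M)) (unt M)) : Prop :=
  (forall x x' y y' (f : hom C x x') (g : hom C y y'),
      T2 x' y' · Tm T (tenm M f g) = tenm M (Tm T f) (Tm T g) · T2 x y) /\
  (forall x y z,
      asc M (Tob T x) (Tob T y) (Tob T z) · tenm M (T2 x y) (idm C (Tob T z))
        · T2 (ten M x y) z =
      tenm M (idm C (Tob T x)) (T2 y z) · T2 x (ten M y z) · Tm T (asc M x y z)) /\
  (forall x,
      lu M (Tob T x) · tenm M T0 (idm C (Tob T x)) · T2 (unt M) x = Tm T (lu M x) /\
      ru M (Tob T x) · tenm M (idm C (Tob T x)) T0 · T2 x (unt M) = Tm T (ru M x)) /\
  (forall x y,
      T2 x y · mu T (ten M x y) =
      tenm M (mu T x) (mu T y) · T2 (Tob T x) (Tob T y) · Tm T (T2 x y)) /\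
  T0 · mu T (unt M) = T0 · Tm T T0 /\
  (forall x y, T2 x y · eta T (ten M x y) = tenm M (eta T x) (eta T y)) /\
  T0 · eta T (unt M) = idm C (unt M).

Arguments MonadAx {C} T.
Arguments BimonadAx {C} M T T2 T0.

Record SOMRaw (D : PDRaw) := mkSOM {
  Tmon : MonadRaw (pcat D);
  T2c : forall x y, hom (pcat D) (Tob Tmon (ten (pc D) x y))
                         (ten (pc D) (Tob Tmon x) (Tob Tmon y));
  T0c : hom (pcat D) (Tob Tmon (unt (pc D))) (unt (pc D));
  T2b : forall x y, hom (pcat D) (Tob Tmon (ten (pb D) x y))
                         (ten (pb D) (Tob Tmon x) (Tob Tmon y));
  T0b : hom (pcat D) (Tob Tmon (unt (pb D))) (unt (pb D)) }.
Arguments Tmon {D} S : rename.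
Arguments T2c {D} S x y : rename.
Arguments T0c {D} S : rename.
Arguments T2b {D} S x y : rename.
Arguments T0b {D} S : rename.

Definition SepOpmonoidalMonad (D : PDRaw) (S : SOMRaw D) : Prop :=
  MonadAx (Tmon S) /\
  BimonadAx (pc D) (Tmon S) (T2c S) (T0c S) /\
  BimonadAx (pb D) (Tmon S) (T2b S) (T0b S).

Section Lift.
Variables (D : PDRaw) (S : SOMRaw D).
Local Notation C := (pcat D).
Local Notation T := (Tmon S).

Definition AlgOb := { a : ob C & hom C (Tob T a) a }.

Definition isAlg (A : AlgOb) : Prop :=
  projT2 A · eta T (projT1 A) = idm C (projT1 A) /\
  projT2 A · Tm T (projT2 A) = projT2 A · mu T (projT1 A).

Definition AlgCat : CatRaw :=
  @mkCat AlgOb (fun A B => hom C (projT1 A) (projT1 B))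
    (fun A => idm C (projT1 A)) (fun A B E g f => g · f).

Definition isAlgMor : MorPred AlgCat :=
  fun A B f =>
    (f : hom C (projT1 A) (projT1 B)) · projT2 A =
    projT2 B · Tm T (f : hom C (projT1 A) (projT1 B)).

Definition liftMon (M : MonRaw C)
  (T2 : forall x y, hom C (Tob T (ten M x y)) (ten M (Tob T x) (Tob T y)))
  (T0 : hom C (Tob T (unt M)) (unt M)) : MonRaw AlgCat :=
  @mkMon AlgCat
    (fun A B => existT (fun a => hom C (Tob T a) a) (ten M (projT1 A) (projT1 B))
                         (tenm M (projT2 A) (projT2 B) · T2 (projT1 A) (projT1 B)))
    (fun A B E F f g => tenm M f g)
    (existT (fun a => hom C (Tob T a) a) (unt M) T0)
    (fun X Y Z => asc M (projT1 X) (projT1 Y) (projT1 Z))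
    (fun X Y Z => asci M (projT1 X) (projT1 Y) (projT1 Z))
    (fun X => lu M (projT1 X)) (fun X => lui M (projT1 X))
    (fun X => ru M (projT1 X)) (fun X => rui M (projT1 X)).

Definition liftPD : PDRaw :=
  @mkPD AlgCat (liftMon (pc D) (T2c S) (T0c S)) (liftMon (pb D) (T2b S) (T0b S)).
End Lift.

Section RMatrix.
Variables (D : PDRaw) (S : SOMRaw D).
Local Notation C := (pcat D).
Local Notation T := (Tob (Tmon S)).
Local Notation TT := (Tmon S).
Local Notation "x ⊗c y" := (ten (pc D) x y) (at level 33, left associativity).
Local Notation "x ⊗b y" := (ten (pb D) x y) (at level 33, left associativity).
Local Notation "f ⊙c g" := (tenm (pc D) f g) (at level 33, left associativity).
Local Notation "f ⊙b g" := (tenm (pb D) f g) (at level 33, left associativity).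
Local Notation bot := (unt (pc D)).
Local Notation one := (unt (pb D)).
Local Notation id x := (idm C x).
Local Notation DT := (liftPD D S).
Local Notation mu := (mu TT).

Definition RMatrix
  (R : forall a b c d, hom C ((a ⊗b b) ⊗c (c ⊗b d)) ((T a ⊗c T c) ⊗b (T b ⊗c T d)))
  (nu : hom C bot (bot ⊗b bot)) (varpi : hom C (one ⊗c one) one)
  (iota : hom C bot one) : Prop :=
  (forall a a' b b' c c' d d' (f : hom C a a') (g : hom C b b')
          (h : hom C c c') (k : hom C d d'),
      R a' b' c' d' · ((f ⊙b g) ⊙c (h ⊙b k)) =
      ((Tm TT f ⊙c Tm TT h) ⊙b (Tm TT g ⊙c Tm TT k)) · R a b c d) /\
  @isAlgMor D S (unt (pc DT)) (ten (pb DT) (unt (pc DT)) (unt (pc DT))) nu /\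
  @isAlgMor D S (ten (pc DT) (unt (pb DT)) (unt (pb DT))) (unt (pb DT)) varpi /\
  @isAlgMor D S (unt (pc DT)) (unt (pb DT)) iota /\
  IsMonoid (pc DT) (unt (pb DT)) varpi iota /\
  IsComonoid (pb DT) (unt (pc DT)) nu iota /\
  (forall A B : AlgOb D S, isAlg D S A -> isAlg D S B ->
     let a := projT1 A in let b := projT1 B in
     let al := projT2 A in let be := projT2 B in
      ((T0c S ⊙c al) ⊙b (T0c S ⊙c be)) · R bot bot a b · (nu ⊙c id (a ⊗b b)) =
        (lui (pc D) a ⊙b lui (pc D) b) · lu (pc D) (a ⊗b b) /\
      ((al ⊙c T0c S) ⊙b (be ⊙c T0c S)) · R a b bot bot · (id (a ⊗b b) ⊙c nu) =
        (rui (pc D) a ⊙b rui (pc D) b) · ru (pc D) (a ⊗b b) /\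
      (varpi ⊙b id (a ⊗c b)) · ((T0b S ⊙c T0b S) ⊙b (al ⊙c be)) · R one a one b =
        lui (pb D) (a ⊗c b) · (lu (pb D) a ⊙c lu (pb D) b) /\
      (id (a ⊗c b) ⊙b varpi) · ((al ⊙c be) ⊙b (T0b S ⊙c T0b S)) · R a one b one =
        rui (pb D) (a ⊗c b) · (ru (pb D) a ⊙c ru (pb D) b)) /\
  (forall a b c d,
      ((mu a ⊙c mu c) ⊙b (mu b ⊙c mu d)) · R (T a) (T b) (T c) (T d)
        · (T2b S a b ⊙c T2b S c d) · T2c S (a ⊗b b) (c ⊗b d) =
      ((mu a ⊙c mu c) ⊙b (mu b ⊙c mu d)) · (T2c S (T a) (T c) ⊙b T2c S (T b) (T d))
        · T2b S (T a ⊗c T c) (T b ⊗c T d) · Tm TT (R a b c d)) /\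
  (* (R-1), with the associators of ∘ inserted *)
  (forall a b c d x y,
      (asc (pc D) (T a) (T c) (T x) ⊙b asc (pc D) (T b) (T d) (T y))
        · (((mu a ⊙c mu c) ⊙c id (T x)) ⊙b ((mu b ⊙c mu d) ⊙c id (T y)))
        · ((T2c S (T a) (T c) ⊙c id (T x)) ⊙b (T2c S (T b) (T d) ⊙c id (T y)))
        · R (T a ⊗c T c) (T b ⊗c T d) x y
        · (R a b c d ⊙c id (x ⊗b y)) =
      ((id (T a) ⊙c (mu c ⊙c mu x)) ⊙b (id (T b) ⊙c (mu d ⊙c mu y)))
        · ((id (T a) ⊙c T2c S (T c) (T x)) ⊙b (id (T b) ⊙c T2c S (T d) (T y)))
        · R a b (T c ⊗c T x) (T d ⊗c T y)
        · (id (a ⊗b b) ⊙c R c d x y)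
        · asc (pc D) (a ⊗b b) (c ⊗b d) (x ⊗b y)) /\
  (* (R-2), with the associator of • inserted *)
  (forall x a c y b d,
      asc (pb D) (T x ⊗c T y) (T a ⊗c T b) (T c ⊗c T d)
        · (((mu x ⊙c mu y) ⊙b (mu a ⊙c mu b)) ⊙b id (T c ⊗c T d))
        · (R (T x) (T a) (T y) (T b) ⊙b id (T c ⊗c T d))
        · ((T2b S x a ⊙c T2b S y b) ⊙b id (T c ⊗c T d))
        · R (x ⊗b a) c (y ⊗b b) d =
      (id (T x ⊗c T y) ⊙b ((mu a ⊙c mu b) ⊙b (mu c ⊙c mu d)))
        · (id (T x ⊗c T y) ⊙b R (T a) (T c) (T b) (T d))
        · (id (T x ⊗c T y) ⊙b (T2b S a c ⊙c T2b S b d))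
        · R x (a ⊗b c) y (b ⊗b d)
        · (asc (pb D) x a c ⊙c asc (pb D) y b d)).

Definition xiR
  (R : forall a b c d, hom C ((a ⊗b b) ⊗c (c ⊗b d)) ((T a ⊗c T c) ⊗b (T b ⊗c T d)))
  (A B E F : AlgOb D S) :
  hom C ((projT1 A ⊗b projT1 B) ⊗c (projT1 E ⊗b projT1 F))
        ((projT1 A ⊗c projT1 E) ⊗b (projT1 B ⊗c projT1 F)) :=
  ((projT2 A ⊙c projT2 E) ⊙b (projT2 B ⊙c projT2 F))
    · R (projT1 A) (projT1 B) (projT1 E) (projT1 F).
End RMatrix.

(* The lifted tensor products are T-algebras because T2 and T0 are compatible
   with mu and eta, and all coherence equations of D^T are those of D.  For the
   duoidal structure, naturality of R makes xi natural along algebra maps.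
   Since every action chi : (T x, mu) -> (x, chi) is an algebra map, this moves
   the actions out of xi and reduces it to xi on free algebras, namely
   ((mu ∘ mu) • (mu ∘ mu)) · R.  In that form the algebra-map property of xi,
   (A1) and (A2) are exactly (R-lift), (R-1) and (R-2) composed with actions,
   and the unit axioms are (R-unit) verbatim. *)


Set Implicit Arguments.
Unset Strict Implicit.

Local Notation "⌊ X ⌋" := (projT1 X).

Section Category.
Variables (C : CatRaw) (hC : CatAx C (allO C) (allM C)).

Lemma compA a b c d (f : hom C a b) (g : hom C b c) (h : hom C c d) :
  h · (g · f) = h · g · f.
Proof. destruct hC as (_ & _ & H & _). now apply H. Qed.

Lemma idm_comp a b (f : hom C a b) : idm C b · f = f.
Proof. destruct hC as (_ & _ & _ & H). now apply H. Qed.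

Lemma comp_idm a b (f : hom C a b) : f · idm C a = f.
Proof. destruct hC as (_ & _ & _ & H). now apply H. Qed.

(* Once composites are left-associated, [X1 · X2] no longer occurs in
   [k · X1 · X2]; these variants let an equation between chains be rewritten
   inside a longer chain. *)
Lemma chain_eq2 a b c (X1 : hom C b c) (X2 : hom C a b) (Y : hom C a c) :
  X1 · X2 = Y -> forall z (k : hom C c z), k · X1 · X2 = k · Y.
Proof. intros H z k. now rewrite <- compA, H. Qed.

Lemma chain_eq3 a b c d (X1 : hom C c d) (X2 : hom C b c) (X3 : hom C a b)
    (Y : hom C a d) :
  X1 · X2 · X3 = Y -> forall z (k : hom C d z), k · X1 · X2 · X3 = k · Y.
Proof. intros H z k. now rewrite <- !compA, <- H, !compA. Qed.

Lemma chain_eq4 a b c d e (X1 : hom C d e) (X2 : hom C c d) (X3 : hom C b c)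
    (X4 : hom C a b) (Y : hom C a e) :
  X1 · X2 · X3 · X4 = Y -> forall z (k : hom C e z), k · X1 · X2 · X3 · X4 = k · Y.
Proof. intros H z k. now rewrite <- !compA, <- H, !compA. Qed.

Lemma chain_eq5 a b c d e f (X1 : hom C e f) (X2 : hom C d e) (X3 : hom C c d)
    (X4 : hom C b c) (X5 : hom C a b) (Y : hom C a f) :
  X1 · X2 · X3 · X4 · X5 = Y ->
  forall z (k : hom C f z), k · X1 · X2 · X3 · X4 · X5 = k · Y.
Proof. intros H z k. now rewrite <- !compA, <- H, !compA. Qed.

End Category.

Ltac assoc hC := repeat rewrite (compA hC).
Ltac rw_chain hC e := assoc hC;
  first [ rewrite (chain_eq2 hC e) | rewrite (chain_eq3 hC e)
        | rewrite (chain_eq4 hC e) | rewrite (chain_eq5 hC e)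
        | rewrite e ];
  assoc hC.
Tactic Notation "rw" constr(hC) uconstr(e) := rw_chain hC e.

Section Monoidal.
Variables (C : CatRaw) (hC : CatAx C (allO C) (allM C)).
Variables (M : MonRaw C) (hM : MonAx M (allO C) (allM C)).

Lemma tenm_id a b : tenm M (idm C a) (idm C b) = idm C (ten M a b).
Proof. destruct hM as (_&_&_&_&_&H&_). now apply H. Qed.

Lemma tenm_comp a1 b1 c1 a2 b2 c2 (f1 : hom C a1 b1) (g1 : hom C b1 c1)
    (f2 : hom C a2 b2) (g2 : hom C b2 c2) :
  tenm M (g1 · f1) (g2 · f2) = tenm M g1 g2 · tenm M f1 f2.
Proof. destruct hM as (_&_&_&_&_&_&H&_). now apply H. Qed.

Lemma asc_nat x x' y y' z z' (f : hom C x x') (g : hom C y y') (h : hom C z z') :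
  asc M x' y' z' · tenm M (tenm M f g) h = tenm M f (tenm M g h) · asc M x y z.
Proof. destruct hM as (_&_&_&_&_&_&_&H&_). now apply H. Qed.

Lemma lu_nat x x' (f : hom C x x') : lu M x' · tenm M (idm C (unt M)) f = f · lu M x.
Proof. destruct hM as (_&_&_&_&_&_&_&_&H&_). now apply H. Qed.

Lemma ru_nat x x' (f : hom C x x') : ru M x' · tenm M f (idm C (unt M)) = f · ru M x.
Proof. destruct hM as (_&_&_&_&_&_&_&_&H&_). now apply H. Qed.

Lemma asc_asci x y z : asc M x y z · asci M x y z = idm C _.
Proof. destruct hM as (_&_&_&_&_&_&_&_&_&H&_). now apply H. Qed.

Lemma asci_asc x y z : asci M x y z · asc M x y z = idm C _.
Proof. destruct hM as (_&_&_&_&_&_&_&_&_&H&_). now apply H. Qed.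

Lemma lu_lui x : lu M x · lui M x = idm C _.
Proof. destruct hM as (_&_&_&_&_&_&_&_&_&_&H&_). now apply H. Qed.

Lemma lui_lu x : lui M x · lu M x = idm C _.
Proof. destruct hM as (_&_&_&_&_&_&_&_&_&_&H&_). now apply H. Qed.

Lemma ru_rui x : ru M x · rui M x = idm C _.
Proof. destruct hM as (_&_&_&_&_&_&_&_&_&_&H&_). now apply H. Qed.

Lemma rui_ru x : rui M x · ru M x = idm C _.
Proof. destruct hM as (_&_&_&_&_&_&_&_&_&_&H&_). now apply H. Qed.

Lemma pentagon x y z w :
  asc M x y (ten M z w) · asc M (ten M x y) z w =
  tenm M (idm C x) (asc M y z w) · asc M x (ten M y z) w
    · tenm M (asc M x y z) (idm C w).
Proof. destruct hM as (_&_&_&_&_&_&_&_&_&_&_&H&_). now apply H. Qed.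

Lemma triangle x y :
  tenm M (idm C x) (lu M y) · asc M x (unt M) y = tenm M (ru M x) (idm C y).
Proof. destruct hM as (_&_&_&_&_&_&_&_&_&_&_&_&H). now apply H. Qed.

Lemma tenm_split_l a b c d (f : hom C a b) (g : hom C c d) :
  tenm M f g = tenm M f (idm C d) · tenm M (idm C a) g.
Proof. now rewrite <- tenm_comp, idm_comp, comp_idm. Qed.

Lemma tenm_split_r a b c d (f : hom C a b) (g : hom C c d) :
  tenm M f g = tenm M (idm C b) g · tenm M f (idm C c).
Proof. now rewrite <- tenm_comp, idm_comp, comp_idm. Qed.

Lemma tenm_comp_l a b c x y (f : hom C a b) (g : hom C b c) (h : hom C x y) :
  tenm M (g · f) h = tenm M g h · tenm M f (idm C x).
Proof. now rewrite <- tenm_comp, comp_idm. Qed.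

Lemma tenm_comp_r a b c x y (f : hom C a b) (g : hom C b c) (h : hom C x y) :
  tenm M h (g · f) = tenm M h g · tenm M (idm C x) f.
Proof. now rewrite <- tenm_comp, comp_idm. Qed.
End Monoidal.

Section Monad.
Variables (C : CatRaw) (T : MonadRaw C) (hT : MonadAx T).

Lemma Tm_id a : Tm T (idm C a) = idm C (Tob T a).
Proof. apply hT. Qed.

Lemma Tm_comp a b c (f : hom C a b) (g : hom C b c) : Tm T (g · f) = Tm T g · Tm T f.
Proof. apply hT. Qed.
End Monad.

Section Bimonad.
Variables (C : CatRaw) (M : MonRaw C) (T : MonadRaw C).
Variable T2 : forall x y, hom C (Tob T (ten M x y)) (ten M (Tob T x) (Tob T y)).
Variables (T0 : hom C (Tob T (unt M)) (unt M)) (hB : BimonadAx M T T2 T0).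

Lemma T2_nat x x' y y' (f : hom C x x') (g : hom C y y') :
  T2 x' y' · Tm T (tenm M f g) = tenm M (Tm T f) (Tm T g) · T2 x y.
Proof. apply hB. Qed.

Lemma T2_asc x y z :
  asc M (Tob T x) (Tob T y) (Tob T z) · tenm M (T2 x y) (idm C (Tob T z))
    · T2 (ten M x y) z =
  tenm M (idm C (Tob T x)) (T2 y z) · T2 x (ten M y z) · Tm T (asc M x y z).
Proof. apply hB. Qed.

Lemma T2_lu x : lu M (Tob T x) · tenm M T0 (idm C (Tob T x)) · T2 (unt M) x = Tm T (lu M x).
Proof. apply hB. Qed.

Lemma T2_ru x : ru M (Tob T x) · tenm M (idm C (Tob T x)) T0 · T2 x (unt M) = Tm T (ru M x).
Proof. apply hB. Qed.

Lemma T2_mu x y :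
  T2 x y · mu T (ten M x y) =
  tenm M (mu T x) (mu T y) · T2 (Tob T x) (Tob T y) · Tm T (T2 x y).
Proof. apply hB. Qed.

Lemma T0_mu : T0 · mu T (unt M) = T0 · Tm T T0.
Proof. apply hB. Qed.

Lemma T2_eta x y : T2 x y · eta T (ten M x y) = tenm M (eta T x) (eta T y).
Proof. apply hB. Qed.

Lemma T0_eta : T0 · eta T (unt M) = idm C (unt M).
Proof. apply hB. Qed.
End Bimonad.

Section Lift.
Variables (D : PDRaw) (S : SOMRaw D).
Local Notation C := (pcat D).
Local Notation T := (Tmon S).
Hypotheses (hC : CatAx C (allO C) (allM C)) (hT : MonadAx T).

Lemma idm_alg_mor A : isAlgMor D S A A (idm C ⌊A⌋).
Proof. unfold isAlgMor; now rewrite idm_comp, Tm_id, comp_idm. Qed.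

Definition free_alg (x : ob C) : AlgOb D S :=
  existT (fun a => hom C (Tob T a) a) (Tob T x) (mu T x).

Lemma act_alg_mor A : isAlg D S A -> isAlgMor D S (free_alg ⌊A⌋) A (projT2 A).
Proof. intros [_ H]; exact (eq_sym H). Qed.

Lemma alg_cat : CatAx (AlgCat D S) (isAlg D S) (isAlgMor D S).
Proof.
  repeat split.
  - intros A _; apply idm_alg_mor.
  - unfold isAlgMor; intros [a al] [b be] [c ga] f g _ _ _ Hf Hg; cbn in *.
    rewrite (Tm_comp hT). assoc hC.
    now rewrite <- Hg, <- (compA hC), Hf, (compA hC).
  - intros; apply (compA hC).
  - intros; apply (idm_comp hC).
  - intros; apply (comp_idm hC).
Qed.

Lemma alg_mor_inv (A B : AlgOb D S) (f : hom C ⌊A⌋ ⌊B⌋)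
    (g : hom C ⌊B⌋ ⌊A⌋) :
  isAlgMor D S A B f -> g · f = idm C _ -> f · g = idm C _ -> isAlgMor D S B A g.
Proof.
  unfold isAlgMor; intros Hf Hgf Hfg.
  rewrite <- (comp_idm hC (g · projT2 B)), <- (Tm_id hT), <- Hfg, (Tm_comp hT).
  assoc hC. rewrite <- (compA hC _ _ g), <- Hf. assoc hC.
  now rewrite Hgf, idm_comp.
Qed.

Section LiftMonoidal.
Variables (M : MonRaw C) (hM : MonAx M (allO C) (allM C)).
Variable T2 : forall x y, hom C (Tob T (ten M x y)) (ten M (Tob T x) (Tob T y)).
Variables (T0 : hom C (Tob T (unt M)) (unt M)) (hB : BimonadAx M T T2 T0).
Local Notation DM := (liftMon D S M T2 T0).

Ltac unfold_alg := unfold isAlg, isAlgMor in *; cbn in *.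

Lemma lift_unit_alg : isAlg D S (unt DM).
Proof. split; cbn; [apply (T0_eta hB) | symmetry; apply (T0_mu hB)]. Qed.

Lemma lift_ten_alg A B : isAlg D S A -> isAlg D S B -> isAlg D S (ten DM A B).
Proof.
  destruct A as [a al], B as [b be]; intros [Ha1 Ha2] [Hb1 Hb2]; unfold_alg; split.
  - rewrite <- (compA hC), (T2_eta hB), <- (tenm_comp hM), Ha1, Hb1.
    apply (tenm_id hM).
  - rewrite (Tm_comp hT). assoc hC.
    rw hC (T2_nat hB _ _). rw hC (eq_sym (tenm_comp hM _ _ _ _)).
    rewrite Ha2, Hb2.
    rw hC (T2_mu hB _ _). now rw hC (eq_sym (tenm_comp hM _ _ _ _)).
Qed.

Lemma lift_tenm_mor (A B E F : AlgOb D S) (f : hom (AlgCat D S) A B)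
    (g : hom (AlgCat D S) E F) :
  isAlgMor D S A B f -> isAlgMor D S E F g ->
  isAlgMor D S (ten DM A E) (ten DM B F) (tenm DM f g).
Proof.
  destruct A, B, E, F; unfold_alg; intros Hf Hg.
  rw hC (eq_sym (tenm_comp hM _ _ _ _)). rewrite Hf, Hg.
  rw hC (tenm_comp hM _ _ _ _). now rw hC (T2_nat hB _ _).
Qed.

Lemma lift_asc_mor A B E :
  isAlgMor D S (ten DM (ten DM A B) E) (ten DM A (ten DM B E)) (asc DM A B E).
Proof.
  destruct A as [a al], B as [b be], E as [e ep]; unfold_alg.
  rewrite (tenm_comp_l hC hM), (tenm_comp_r hC hM). assoc hC.
  rw hC (asc_nat hM _ _ _). now rw hC (T2_asc hB _ _ _).
Qed.

Lemma lift_lu_mor A : isAlgMor D S (ten DM (unt DM) A) A (lu DM A).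
Proof.
  destruct A as [a al]; unfold_alg.
  rewrite (tenm_split_r hC hM T0 al). assoc hC.
  rw hC (lu_nat hM _). now rw hC (T2_lu hB _).
Qed.

Lemma lift_ru_mor A : isAlgMor D S (ten DM A (unt DM)) A (ru DM A).
Proof.
  destruct A as [a al]; unfold_alg.
  rewrite (tenm_split_l hC hM al T0). assoc hC.
  rw hC (ru_nat hM _). now rw hC (T2_ru hB _).
Qed.

(* Apart from the closure conditions, every axiom of the lifted structure is
   literally the corresponding axiom of [M]. *)
Lemma lift_monoidal : MonAx DM (isAlg D S) (isAlgMor D S).
Proof.
  split; [exact lift_unit_alg|].
  split; [exact lift_ten_alg|].
  split; [intros * _ _ _ _; apply lift_tenm_mor|].
  split.
  { intros x y z _ _ _; split; [apply lift_asc_mor|].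
    eapply alg_mor_inv; [apply lift_asc_mor | apply (asci_asc hM) | apply (asc_asci hM)]. }
  split.
  { intros x _; split; [|split; [|split]].
    - apply lift_lu_mor.
    - eapply alg_mor_inv; [apply lift_lu_mor | apply (lui_lu hM) | apply (lu_lui hM)].
    - apply lift_ru_mor.
    - eapply alg_mor_inv; [apply lift_ru_mor | apply (rui_ru hM) | apply (ru_rui hM)]. }
  split; [intros; apply (tenm_id hM)|].
  split; [intros; apply (tenm_comp hM)|].
  split; [intros; apply (asc_nat hM)|].
  split; [intros; split; [apply (lu_nat hM) | apply (ru_nat hM)]|].
  split; [intros; split; [apply (asc_asci hM) | apply (asci_asc hM)]|].
  split; [intros; split; [|split; [|split]];
          [apply (lu_lui hM) | apply (lui_lu hM) | apply (ru_rui hM) | apply (rui_ru hM)]|].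
  split; [intros; apply (pentagon hM)|].
  intros; apply (triangle hM).
Qed.
End LiftMonoidal.
End Lift.

Section LiftDuoidal.
Variables (D : PDRaw) (S : SOMRaw D).
Local Notation C := (pcat D).
Local Notation T := (Tmon S).
Local Notation DT := (liftPD D S).
Local Notation "x ⊗c y" := (ten (pc D) x y) (at level 33, left associativity).
Local Notation "x ⊗b y" := (ten (pb D) x y) (at level 33, left associativity).
Local Notation "f ⊙c g" := (tenm (pc D) f g) (at level 33, left associativity).
Local Notation "f ⊙b g" := (tenm (pb D) f g) (at level 33, left associativity).
Local Notation id x := (idm C x).
Hypotheses (hC : CatAx C (allO C) (allM C)) (hT : MonadAx T).
Hypotheses (hMc : MonAx (pc D) (allO C) (allM C)) (hMb : MonAx (pb D) (allO C) (allM C)).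
Hypotheses (hBc : BimonadAx (pc D) T (T2c S) (T0c S))
  (hBb : BimonadAx (pb D) T (T2b S) (T0b S)).
Variable R : forall a b c d,
  hom C ((a ⊗b b) ⊗c (c ⊗b d)) ((Tob T a ⊗c Tob T c) ⊗b (Tob T b ⊗c Tob T d)).
Variables (nu : hom C (unt (pc D)) (unt (pc D) ⊗b unt (pc D)))
  (varpi : hom C (unt (pb D) ⊗c unt (pb D)) (unt (pb D)))
  (iota : hom C (unt (pc D)) (unt (pb D))).
Hypothesis hR : RMatrix D S R nu varpi iota.
Local Notation xi := (xiR D S R).
Local Notation "X ⊗C Y" := (ten (pc DT) X Y) (at level 33, left associativity).
Local Notation "X ⊗B Y" := (ten (pb DT) X Y) (at level 33, left associativity).

Lemma R_nat a a' b b' c c' d d' (f : hom C a a') (g : hom C b b') (h : hom C c c')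
    (k : hom C d d') :
  R a' b' c' d' · ((f ⊙b g) ⊙c (h ⊙b k)) =
  ((Tm T f ⊙c Tm T h) ⊙b (Tm T g ⊙c Tm T k)) · R a b c d.
Proof. apply hR. Qed.

Lemma xi_nat (X X' Y Y' A A' B B' : AlgOb D S) (f : hom C ⌊X⌋ ⌊X'⌋)
    (g : hom C ⌊Y⌋ ⌊Y'⌋) (h : hom C ⌊A⌋ ⌊A'⌋)
    (k : hom C ⌊B⌋ ⌊B'⌋) :
  isAlgMor D S X X' f -> isAlgMor D S Y Y' g ->
  isAlgMor D S A A' h -> isAlgMor D S B B' k ->
  xi X' Y' A' B' · ((f ⊙b g) ⊙c (h ⊙b k)) = ((f ⊙c h) ⊙b (g ⊙c k)) · xi X Y A B.
Proof.
  unfold xiR, isAlgMor; cbn; intros Hf Hg Hh Hk.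
  rw hC (R_nat _ _ _ _).
  now rewrite <- !(tenm_comp hMb), <- !(tenm_comp hMc), <- Hf, <- Hg, <- Hh, <- Hk.
Qed.

Lemma xi_tensor_act_b (X Y A B : AlgOb D S) :
  isAlg D S X -> isAlg D S Y -> isAlg D S A -> isAlg D S B ->
  xi X Y A B · (((projT2 X ⊙b projT2 Y) · T2b S ⌊X⌋ ⌊Y⌋)
                ⊙c ((projT2 A ⊙b projT2 B) · T2b S ⌊A⌋ ⌊B⌋)) =
  ((projT2 X ⊙c projT2 A) ⊙b (projT2 Y ⊙c projT2 B))
    · ((mu T ⌊X⌋ ⊙c mu T ⌊A⌋) ⊙b (mu T ⌊Y⌋ ⊙c mu T ⌊B⌋))
    · R (Tob T ⌊X⌋) (Tob T ⌊Y⌋) (Tob T ⌊A⌋) (Tob T ⌊B⌋)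
    · (T2b S ⌊X⌋ ⌊Y⌋ ⊙c T2b S ⌊A⌋ ⌊B⌋).
Proof.
  intros HX HY HA HB.
  pose proof (xi_nat (act_alg_mor HX) (act_alg_mor HY) (act_alg_mor HA) (act_alg_mor HB))
    as E; cbn in E |- *.
  rewrite (tenm_comp hMc). rw hC E.
  unfold xiR; cbn. now assoc hC.
Qed.

Lemma act_tenm_c_mu (X A : AlgOb D S) : isAlg D S X -> isAlg D S A ->
  (projT2 X ⊙c projT2 A) · T2c S ⌊X⌋ ⌊A⌋ · Tm T (projT2 X ⊙c projT2 A) =
  (projT2 X ⊙c projT2 A) · (mu T ⌊X⌋ ⊙c mu T ⌊A⌋)
    · T2c S (Tob T ⌊X⌋) (Tob T ⌊A⌋).
Proof.
  intros HX HA.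
  pose proof (lift_tenm_mor hC hMc hBc (act_alg_mor HX) (act_alg_mor HA)) as E.
  unfold isAlgMor in E; cbn in E. rewrite (compA hC) in E; exact (eq_sym E).
Qed.

Lemma xi_alg_mor (X Y A B : AlgOb D S) :
  isAlg D S X -> isAlg D S Y -> isAlg D S A -> isAlg D S B ->
  isAlgMor D S (ten (pc DT) (ten (pb DT) X Y) (ten (pb DT) A B))
    (ten (pb DT) (ten (pc DT) X A) (ten (pc DT) Y B)) (xi X Y A B).
Proof.
  intros HX HY HA HB. destruct hR as (_&_&_&_&_&_&_&R_lift&_).
  unfold isAlgMor; cbn.
  rewrite (compA hC), (xi_tensor_act_b HX HY HA HB). assoc hC. rw hC (R_lift _ _ _ _).
  symmetry; unfold xiR.
  rewrite (Tm_comp hT). rw hC (T2_nat hBb _ _).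
  rw hC (eq_sym (tenm_comp hMb (Tm T _) _ (Tm T _) _)).
  rewrite (act_tenm_c_mu HX HA), (act_tenm_c_mu HY HB).
  rewrite !(tenm_comp hMb). now assoc hC.
Qed.

Lemma xi_tensor_act_c_l (X Y A B E F : AlgOb D S) :
  isAlg D S X -> isAlg D S Y -> isAlg D S A -> isAlg D S B ->
  xi (X ⊗C A) (Y ⊗C B) E F
    · (((projT2 X ⊙c projT2 A) ⊙b (projT2 Y ⊙c projT2 B)) ⊙c id (⌊E⌋ ⊗b ⌊F⌋)) =
  (((projT2 X ⊙c projT2 A) ⊙c projT2 E) ⊙b ((projT2 Y ⊙c projT2 B) ⊙c projT2 F))
    · (((mu T ⌊X⌋ ⊙c mu T ⌊A⌋) ⊙c id (Tob T ⌊E⌋))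
         ⊙b ((mu T ⌊Y⌋ ⊙c mu T ⌊B⌋) ⊙c id (Tob T ⌊F⌋)))
    · ((T2c S (Tob T ⌊X⌋) (Tob T ⌊A⌋) ⊙c id (Tob T ⌊E⌋))
         ⊙b (T2c S (Tob T ⌊Y⌋) (Tob T ⌊B⌋) ⊙c id (Tob T ⌊F⌋)))
    · R (Tob T ⌊X⌋ ⊗c Tob T ⌊A⌋) (Tob T ⌊Y⌋ ⊗c Tob T ⌊B⌋) ⌊E⌋ ⌊F⌋.
Proof.
  intros HX HY HA HB.
  pose proof (xi_nat (lift_tenm_mor hC hMc hBc (act_alg_mor HX) (act_alg_mor HA))
                     (lift_tenm_mor hC hMc hBc (act_alg_mor HY) (act_alg_mor HB))
                     (idm_alg_mor hC hT E) (idm_alg_mor hC hT F)) as N.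
  cbn in N |- *. rewrite <- (tenm_id hMb), N. unfold xiR; cbn.
  assoc hC. rewrite <- !(tenm_comp hMb), <- !(tenm_comp hMc), !(idm_comp hC), !(comp_idm hC).
  assoc hC. now rewrite <- !(tenm_comp hMc).
Qed.

Lemma xi_tensor_act_c_r (X Y A B E F : AlgOb D S) :
  isAlg D S A -> isAlg D S B -> isAlg D S E -> isAlg D S F ->
  xi X Y (A ⊗C E) (B ⊗C F)
    · (id (⌊X⌋ ⊗b ⌊Y⌋) ⊙c ((projT2 A ⊙c projT2 E) ⊙b (projT2 B ⊙c projT2 F))) =
  ((projT2 X ⊙c (projT2 A ⊙c projT2 E)) ⊙b (projT2 Y ⊙c (projT2 B ⊙c projT2 F)))
    · ((id (Tob T ⌊X⌋) ⊙c (mu T ⌊A⌋ ⊙c mu T ⌊E⌋))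
         ⊙b (id (Tob T ⌊Y⌋) ⊙c (mu T ⌊B⌋ ⊙c mu T ⌊F⌋)))
    · ((id (Tob T ⌊X⌋) ⊙c T2c S (Tob T ⌊A⌋) (Tob T ⌊E⌋))
         ⊙b (id (Tob T ⌊Y⌋) ⊙c T2c S (Tob T ⌊B⌋) (Tob T ⌊F⌋)))
    · R ⌊X⌋ ⌊Y⌋ (Tob T ⌊A⌋ ⊗c Tob T ⌊E⌋) (Tob T ⌊B⌋ ⊗c Tob T ⌊F⌋).
Proof.
  intros HA HB HE HF.
  pose proof (xi_nat (idm_alg_mor hC hT X) (idm_alg_mor hC hT Y)
                     (lift_tenm_mor hC hMc hBc (act_alg_mor HA) (act_alg_mor HE))
                     (lift_tenm_mor hC hMc hBc (act_alg_mor HB) (act_alg_mor HF))) as N.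
  cbn in N |- *. rewrite <- (tenm_id hMb), N. unfold xiR; cbn.
  assoc hC. rewrite <- !(tenm_comp hMb), <- !(tenm_comp hMc), !(idm_comp hC), !(comp_idm hC).
  assoc hC. now rewrite <- !(tenm_comp hMc).
Qed.

Lemma xi_assoc_c (X Y A B E F : AlgOb D S) :
  isAlg D S X -> isAlg D S Y -> isAlg D S A -> isAlg D S B ->
  isAlg D S E -> isAlg D S F ->
  (asc (pc D) ⌊X⌋ ⌊A⌋ ⌊E⌋ ⊙b asc (pc D) ⌊Y⌋ ⌊B⌋ ⌊F⌋)
    · xi (X ⊗C A) (Y ⊗C B) E F
    · (xi X Y A B ⊙c id (⌊E⌋ ⊗b ⌊F⌋)) =
  xi X Y (A ⊗C E) (B ⊗C F) · (id (⌊X⌋ ⊗b ⌊Y⌋) ⊙c xi A B E F)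
    · asc (pc D) (⌊X⌋ ⊗b ⌊Y⌋) (⌊A⌋ ⊗b ⌊B⌋) (⌊E⌋ ⊗b ⌊F⌋).
Proof.
  intros HX HY HA HB HE HF. destruct hR as (_&_&_&_&_&_&_&_&R_1&_).
  pose proof (xi_tensor_act_c_l E F HX HY HA HB) as L.
  pose proof (xi_tensor_act_c_r X Y HA HB HE HF) as Rt.
  unfold xiR at 2 4. cbn in L, Rt |- *.
  rewrite (tenm_comp_l hC hMc), (tenm_comp_r hC hMc).
  rw hC L. rw hC Rt.
  rw hC (eq_sym (tenm_comp hMb _ (asc _ _ _ _) _ (asc _ _ _ _))).
  rewrite !(asc_nat hMc), (tenm_comp hMb). assoc hC.
  now rw hC (R_1 _ _ _ _ _ _).
Qed.

Lemma xi_assoc_b (X Y A B E F : AlgOb D S) :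
  isAlg D S X -> isAlg D S Y -> isAlg D S A -> isAlg D S B ->
  isAlg D S E -> isAlg D S F ->
  asc (pb D) (⌊X⌋ ⊗c ⌊Y⌋) (⌊A⌋ ⊗c ⌊B⌋) (⌊E⌋ ⊗c ⌊F⌋)
    · (xi X A Y B ⊙b id (⌊E⌋ ⊗c ⌊F⌋))
    · xi (X ⊗B A) E (Y ⊗B B) F =
  (id (⌊X⌋ ⊗c ⌊Y⌋) ⊙b xi A E B F) · xi X (A ⊗B E) Y (B ⊗B F)
    · (asc (pb D) ⌊X⌋ ⌊A⌋ ⌊E⌋ ⊙c asc (pb D) ⌊Y⌋ ⌊B⌋ ⌊F⌋).
Proof.
  intros HX HY HA HB HE HF. destruct hR as (_&_&_&_&_&_&_&_&_&R_2).
  pose proof (xi_tensor_act_b HX HA HY HB) as EXAYB.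
  pose proof (xi_tensor_act_b HA HE HB HF) as EAEBF.
  unfold xiR at 2 4. cbn. assoc hC.
  rw hC (eq_sym (tenm_comp hMb _ (xi X A Y B) _ (id _))).
  rewrite (idm_comp hC), EXAYB, !(tenm_comp_l hC hMb). assoc hC.
  rw hC (asc_nat hMb _ _ _). rw hC (R_2 _ _ _ _ _ _).
  rw hC (eq_sym (tenm_comp hMb _ (id _) _ (xi A E B F))).
  rewrite (idm_comp hC), EAEBF, !(tenm_comp_r hC hMb). now assoc hC.
Qed.

Lemma lift_duoidal : Duoidal DT (isAlg D S) (isAlgMor D S) xi nu varpi iota.
Proof.
  destruct hR as (_ & Hnu & Hvarpi & Hiota & Hmon & Hcomon & HRu & _).
  split; [intros; now apply xi_alg_mor|].
  split; [exact Hnu|]. split; [exact Hvarpi|]. split; [exact Hiota|].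
  split; [intros * _ _ _ _ _ _ _ _; apply xi_nat|].
  split; [exact Hmon|]. split; [exact Hcomon|].
  split; [intros; now apply xi_assoc_c|].
  split; [intros; now apply xi_assoc_b|].
  intros A B HA HB. pose proof (HRu A B HA HB) as U.
  unfold xiR; cbn in U |- *. assoc hC. exact U.
Qed.
End LiftDuoidal.

Unset Implicit Arguments.

Theorem mainTheorem2 (D : PDRaw)
  (hD : Preduoidal D (allO (pcat D)) (allM (pcat D)))
  (S : SOMRaw D) (hS : SepOpmonoidalMonad D S)
  (R : forall a b c d,
     hom (pcat D) (ten (pc D) (ten (pb D) a b) (ten (pb D) c d))
       (ten (pb D) (ten (pc D) (Tob (Tmon S) a) (Tob (Tmon S) c))
                   (ten (pc D) (Tob (Tmon S) b) (Tob (Tmon S) d))))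
  (nu : hom (pcat D) (unt (pc D)) (ten (pb D) (unt (pc D)) (unt (pc D))))
  (varpi : hom (pcat D) (ten (pc D) (unt (pb D)) (unt (pb D))) (unt (pb D)))
  (iota : hom (pcat D) (unt (pc D)) (unt (pb D)))
  (hR : RMatrix D S R nu varpi iota) :
  Preduoidal (liftPD D S) (isAlg D S) (isAlgMor D S) /\
  Duoidal (liftPD D S) (isAlg D S) (isAlgMor D S) (xiR D S R) nu varpi iota.
Proof.
  destruct hD as (hC & hMc & hMb), hS as (hT & hBc & hBb).
  split; [split; [|split]|].
  - exact (alg_cat hC hT).
  - exact (lift_monoidal hC hT hMc hBc).
  - exact (lift_monoidal hC hT hMb hBb).
  - exact (lift_duoidal hC hT hMc hMb hBc hBb hR).
Qed.
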